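(* Let $\mathfrak g$ be a finite-dimensional Lie algebra over a field $k$ of characteristic zero. If $\mathfrak g$ admits an LR-structure, then $\mathfrak g$ also admits a complete LR-structure.
   Context: An LR-algebra is a vector space $A$ with a bilinear product $\cdot$ satisfying $x\cdot(y\cdot z)=y\cdot(x\cdot z)$ and $(x\cdot y)\cdot z=(x\cdot z)\cdot y$ for all $x,y,z\in A$. An LR-structure on a Lie algebra $\mathfrak g$ is an LR-algebra product on the underlying vector space of $\mathfrak g$ such that $x\cdot y-y\cdot x=[x,y]$ for all $x,y$. An LR-structure is complete if all right multiplications $R(x)\colon y\mapsto y\cdot x$ are nilpotent. *)

From HB Require Import structures.
From mathcomp Require Import all_boot all_order all_algebra.
Set Implicit Arguments. Unset Strict Implicit. Unset Printing Implicit Defensive.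
Import GRing.Theory.
Local Open Scope ring_scope.

Definition bilin_map (F : fieldType) (n : nat)
    (f : 'rV[F]_n -> 'rV[F]_n -> 'rV[F]_n) : Prop :=
  (forall (a : F) x y z, f (a *: x + y) z = a *: f x z + f y z) /\
  (forall (a : F) x y z, f z (a *: x + y) = a *: f z x + f z y).

Definition is_lie_bracket (F : fieldType) (n : nat)
    (br : 'rV[F]_n -> 'rV[F]_n -> 'rV[F]_n) : Prop :=
  [/\ bilin_map br,
      (forall x, br x x = 0) &
      (forall x y z, br x (br y z) + br y (br z x) + br z (br x y) = 0)].

Definition is_LR_algebra (F : fieldType) (n : nat)
    (p : 'rV[F]_n -> 'rV[F]_n -> 'rV[F]_n) : Prop :=
  [/\ bilin_map p,
      (forall x y z, p x (p y z) = p y (p x z)) &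
      (forall x y z, p (p x y) z = p (p x z) y)].

Definition is_LR_structure (F : fieldType) (n : nat)
    (br p : 'rV[F]_n -> 'rV[F]_n -> 'rV[F]_n) : Prop :=
  is_LR_algebra p /\ (forall x y, p x y - p y x = br x y).

Definition right_mul (F : fieldType) (n : nat)
    (p : 'rV[F]_n -> 'rV[F]_n -> 'rV[F]_n) (x : 'rV[F]_n) : 'rV[F]_n -> 'rV[F]_n :=
  fun y => p y x.

Definition complete_product (F : fieldType) (n : nat)
    (p : 'rV[F]_n -> 'rV[F]_n -> 'rV[F]_n) : Prop :=
  forall x, exists m : nat, forall y, iter m (right_mul p x) y = 0.

From HB Require Import structures.
From mathcomp Require Import all_boot all_order all_algebra.
From mathcomp Require Import ring.
Set Implicit Arguments. Unset Strict Implicit. Unset Printing Implicit Defensive.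
Import GRing.Theory.
Local Open Scope ring_scope.

(* Let (A, .) be an LR-structure on g = F^n.  The identity (x.y).z = (x.z).y
   says that all right multiplications R(y) commute.  For each basis vector
   e_j, the Fitting decomposition of T_j = R(e_j) is given by an idempotent
   P_j, a polynomial in T_j, such that T_j is nilpotent on the image of P_j
   and invertible on the image of 1 - P_j.  The product P of the P_j is an
   idempotent commuting with every R(y); it splits A = A0 (+) A1 where every
   R(y) is nilpotent on A0 = AP, while A1 = A(1 - P) lies in A.A.  Using the
   LR identities one shows A0.A1 = 0 and that A1 is commutative, and then
     x o y = x0.y0 - y1.x0     (x = x0 + x1, y = y0 + y1)
   is an LR-product with the same commutator as ., whose right
   multiplications map A into A0 and act there as R(y0): it is complete. *)

(* If Q commutes with the commuting X, Y and Q X^a = Q Y^b = 0, then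
   Q (X + Y)^(a+b) = 0: each binomial term contains X^a or Y^b. *)
Lemma mul_exprD_eq0 (R : pzRingType) (Q X Y : R) (a b : nat) :
  GRing.comm X Y -> GRing.comm Q X -> GRing.comm Q Y ->
  Q * X ^+ a = 0 -> Q * Y ^+ b = 0 -> Q * (X + Y) ^+ (a + b) = 0.
Proof.
move=> cXY cQX cQY QXa QYb.
rewrite exprDn_comm // mulr_sumr big1 // => i _.
rewrite mulrnAr mulrA; case: (leqP b i) => [le_bi | lt_ib].
  rewrite -(subnKC le_bi) exprD (commrX _ cQX) -!mulrA [Q * (_ * _)]mulrA QYb.
  by rewrite mul0r mulr0 mul0rn.
have le_a : (a <= a + b - i)%N by rewrite -addnBA ?leq_addr // ltnW.
by rewrite -(subnKC le_a) exprD mulrA QXa !mul0r mul0rn.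
Qed.

Lemma mul_expr_sum_eq0 (R : pzRingType) (I : Type) (r : seq I)
    (G : I -> R) (Q : R) :
  (forall i j, GRing.comm (G i) (G j)) -> (forall i, GRing.comm Q (G i)) ->
  (forall i, exists k, Q * G i ^+ k = 0) ->
  exists k, Q * (\sum_(i <- r) G i) ^+ k = 0.
Proof.
move=> cG cQG nilG; elim: r => [|i r [k IH]].
  by exists 1%N; rewrite big_nil expr1 mulr0.
have [ki Hi] := nilG i.
exists (ki + k)%N; rewrite big_cons; apply: mul_exprD_eq0 => //.
- by apply: commr_sum => j _; apply: cG.
- by apply: commr_sum => j _; apply: cQG.
Qed.

Definition fitting_projector (F : fieldType) (m : nat) (T P : 'M[F]_m.+1)
    : Prop :=
  [/\ P * P = P,
      (forall S, T * S = S * T -> P * S = S * P),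
      exists k, P * T ^+ k = 0 &
      exists2 Q, 1 - P = Q * T & Q * P = 0].

(* Fitting's lemma: writing char_poly T = q X^k with q(0) <> 0 and choosing a
   Bezout relation u q + v X^(k+1) = 1, the matrix P = (u q)(T) works. *)
Lemma fitting_projector_exists (F : fieldType) (m : nat) (T : 'M[F]_m.+1) :
  exists P, fitting_projector T P.
Proof.
have [k [q not_root_q def_chi]] := multiplicity_XsubC (char_poly T) 0.
rewrite monic_neq0 ?char_poly_monic //= in not_root_q.
set X := 'X - 0%:P in def_chi.
have hX : horner_mx T X = T by rewrite /X polyC0 subr0 horner_mx_X.
have h_chi r : horner_mx T (r * (q * X ^+ k)) = 0.
  by rewrite rmorphM /= -def_chi Cayley_Hamilton mulr0.
have : coprimep q (X ^+ k.+1) by rewrite coprimep_expr ?coprimep_XsubC.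
case/Bezout_eq1_coprimepP=> [[u v] /= Bezout].
set P := horner_mx T (u * q); set Q0 := horner_mx T (v * X ^+ k).
have PQ0 : 1 - P = Q0 * T.
  rewrite -hX -rmorphM -(rmorph1 (horner_mx T)) -rmorphB -Bezout.
  by rewrite addrAC subrr add0r exprSr mulrA.
(* P (1 - P) = (u v X q X^k)(T) vanishes by Cayley-Hamilton. *)
have P_kills : P * Q0 * T = 0.
  rewrite -hX -!rmorphM.
  have -> : u * q * (v * X ^+ k) * X = u * v * X * (q * X ^+ k) by ring.
  exact: h_chi.
have P_idem : P * P = P.
  have : P * (1 - P) = 0 by rewrite PQ0 mulrA P_kills.
  by rewrite mulrBr mulr1 => /eqP; rewrite subr_eq0 => /eqP.
exists P; split=> //.
- move=> S TS; have := @comm_horner_mx _ _ T S (u * q).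
  by rewrite /comm_mx !mulmxE; apply.
- exists k.+1; rewrite -hX -rmorphXn -rmorphM.
  have -> : u * q * X ^+ k.+1 = u * X * (q * X ^+ k) by rewrite exprSr; ring.
  exact: h_chi.
- exists ((1 - P) * Q0).
    by rewrite -mulrA -PQ0 mulrBr mulr1 mulrBl mul1r P_idem subrr subr0.
  by rewrite -mulrA (comm_horner_mx2 T) mulrA mulrBl mul1r P_idem subrr mul0r.
Qed.

Section LRAlgebra.
Variables (F : fieldType) (m : nat).
Local Notation V := 'rV[F]_m.+1.
Local Notation M := 'M[F]_m.+1.
Variable p : V -> V -> V.
Hypothesis p_bilin : bilin_map p.
Hypothesis p_left_comm : forall x y z, p x (p y z) = p y (p x z).
Hypothesis p_right_comm : forall x y z, p (p x y) z = p (p x z) y.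

Lemma pDZl a x y z : p (a *: x + y) z = a *: p x z + p y z.
Proof. by case: p_bilin. Qed.
Lemma pDZr a x y z : p z (a *: x + y) = a *: p z x + p z y.
Proof. by case: p_bilin. Qed.
Lemma pDl x y z : p (x + y) z = p x z + p y z.
Proof. by rewrite -[x]scale1r pDZl !scale1r. Qed.
Lemma pDr x y z : p z (x + y) = p z x + p z y.
Proof. by rewrite -[x]scale1r pDZr !scale1r. Qed.
Lemma p0l z : p 0 z = 0.
Proof. by apply: (@addrI _ (p 0 z)); rewrite -pDl !addr0. Qed.
Lemma p0r z : p z 0 = 0.
Proof. by apply: (@addrI _ (p z 0)); rewrite -pDr !addr0. Qed.
Lemma pZl a x z : p (a *: x) z = a *: p x z.
Proof. by rewrite -[a *: x]addr0 pDZl p0l addr0. Qed.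
Lemma pZr a x z : p z (a *: x) = a *: p z x.
Proof. by rewrite -[a *: x]addr0 pDZr p0r addr0. Qed.
Lemma pNl x z : p (- x) z = - p x z.
Proof. by rewrite -scaleN1r pZl scaleN1r. Qed.
Lemma psuml (I : Type) (r : seq I) (f : I -> V) z :
  p (\sum_(i <- r) f i) z = \sum_(i <- r) p (f i) z.
Proof. exact: (big_morph (p^~ z) (fun x y => pDl x y z) (p0l z)). Qed.
Lemma psumr (I : Type) (r : seq I) (f : I -> V) z :
  p z (\sum_(i <- r) f i) = \sum_(i <- r) p z (f i).
Proof. exact: (big_morph (p z) (fun x y => pDr x y z) (p0r z)). Qed.

Definition Rmx (y : V) : M := \matrix_(i, j) p 'e_i y 0 j.

Lemma RmxE x y : x *m Rmx y = p x y.
Proof.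
rewrite {2}(row_sum_delta x) psuml; apply/rowP => j.
by rewrite !mxE summxE; apply: eq_bigr => i _; rewrite pZl !mxE.
Qed.

(* (x.y).z = (x.z).y: right multiplications commute. *)
Lemma Rmx_comm y z : GRing.comm (Rmx y) (Rmx z).
Proof. by apply/eqP/mulmxP => x; rewrite -!mulmxE !mulmxA !RmxE. Qed.

Definition T (j : 'I_m.+1) : M := Rmx 'e_j.

Lemma Rmx_sum y : Rmx y = \sum_j y 0 j *: T j.
Proof.
apply/eqP/mulmxP => x; rewrite RmxE {1}(row_sum_delta y) psumr mulmx_sumr.
by apply: eq_bigr => j _; rewrite pZr -scalemxAr RmxE.
Qed.

Lemma prod_prod_comm a b c d : p (p a b) (p c d) = p (p c d) (p a b).
Proof.
have shift x w y z : p z (p (p x w) y) = p (p z (p x w)) y.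
  transitivity (p (p x y) (p z w)); first by rewrite p_right_comm p_left_comm.
  by rewrite [p z (p x w)]p_left_comm p_right_comm.
by rewrite p_left_comm shift p_right_comm.
Qed.

Variable Pj : 'I_m.+1 -> M.
Hypothesis Pj_fitting : forall j, fitting_projector (T j) (Pj j).

Lemma Pj_idem j : Pj j * Pj j = Pj j.
Proof. by case: (Pj_fitting j). Qed.

Lemma Pj_comm j S : GRing.comm (T j) S -> GRing.comm (Pj j) S.
Proof. by case: (Pj_fitting j) => _ cP _ _; apply: cP. Qed.

Definition Pprod (s : seq 'I_m.+1) : M := \prod_(j <- s) Pj j.
Definition nilproj : M := Pprod (index_enum 'I_m.+1).

Lemma Pprod_comm s S : (forall j, GRing.comm (T j) S) -> GRing.comm (Pprod s) S.
Proof.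
move=> cTS; elim: s => [|j s IH]; rewrite /Pprod ?big_nil ?big_cons.
  exact/commr_sym/commr1.
by apply/commr_sym/commrM; apply/commr_sym => //; apply: Pj_comm.
Qed.

Lemma Pprod_commPj s j : GRing.comm (Pprod s) (Pj j).
Proof. by apply: Pprod_comm => i; apply/commr_sym/Pj_comm/Rmx_comm. Qed.

Lemma Pprod_idem s : Pprod s * Pprod s = Pprod s.
Proof.
elim: s => [|j s IH]; first by rewrite /Pprod big_nil mul1r.
rewrite /Pprod big_cons -/(Pprod s) -mulrA [Pprod s * _]mulrA Pprod_commPj.
by rewrite -mulrA IH mulrA Pj_idem.
Qed.

Lemma Pprod_absorb s j : j \in s -> Pprod s * Pj j = Pprod s.
Proof.
elim: s => [//|i s IH]; rewrite inE /Pprod big_cons -/(Pprod s) -mulrA.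
by case/predU1P => [<- | /IH ->] //; rewrite Pprod_commPj mulrA Pj_idem.
Qed.

(* w (1 - Pprod s) is a sum of products v.e_j = v T_j with v Pj j = 0,
   by induction on s using 1 - Pj j = Q T_j. *)
Lemma Pprod_compl_decomp s (w : V) : exists r : seq ('I_m.+1 * V),
  w *m (1 - Pprod s) = \sum_(t <- r) t.2 *m T t.1 /\
  (forall t, t \in r -> t.2 *m Pj t.1 = 0).
Proof.
elim: s w => [|j s IH] w.
  by exists [::]; rewrite /Pprod big_nil subrr mulmx0 big_nil.
have [r [def_w r_ker]] := IH (w *m Pj j).
case: (Pj_fitting j) => _ _ _ [Q PQ QP].
exists ((j, w *m Q) :: r); split.
  rewrite big_cons /= /Pprod big_cons -/(Pprod s) -def_w.
  have -> : 1 - Pj j * Pprod s = (1 - Pj j) + Pj j * (1 - Pprod s).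
    by rewrite mulrBr mulr1 addrA subrK.
  by rewrite mulmxDr PQ -!mulmxE !mulmxA.
move=> t; rewrite inE => /predU1P [-> /= | tr]; last exact: r_ker.
by rewrite -mulmxA mulmxE QP mulmx0.
Qed.

(* nilproj projects onto A0 = V P, along A1 = V (1 - P). *)
Local Notation P := nilproj.

Lemma nilproj_idem : P * P = P.
Proof. exact: Pprod_idem. Qed.

Lemma nilproj_comm y : GRing.comm P (Rmx y).
Proof. by apply: Pprod_comm => j; apply: Rmx_comm. Qed.

Lemma nilproj_absorb j : P * Pj j = P.
Proof. exact/Pprod_absorb/mem_index_enum. Qed.

Lemma nilprojK (x : V) : x *m P *m P = x *m P.
Proof. by rewrite -mulmxA mulmxE nilproj_idem. Qed.

Lemma nilproj_compl (x : V) : (x - x *m P) *m P = 0.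
Proof. by rewrite mulmxBl nilprojK subrr. Qed.

Lemma compl_fixed (w : V) : w *m P = 0 -> w *m (1 - P) = w.
Proof. by rewrite mulmxBr mulmx1 => ->; rewrite subr0. Qed.

Lemma p_nilproj x y : p x y *m P = p (x *m P) y.
Proof. by rewrite -!RmxE -mulmxA mulmxE -nilproj_comm -mulmxE mulmxA. Qed.

Lemma nil_compl_eq0 x w : x *m P = x -> w *m P = 0 -> p x w = 0.
Proof.
move=> x0 w1; have [r [def_w r_ker]] := Pprod_compl_decomp (index_enum _) w.
rewrite -(compl_fixed w1) def_w psumr.
rewrite big1_seq // => -[j v] /andP [_ /r_ker /= vPj].
(* x.(v.e_j) = v.(x.e_j) lies in A0 and is killed by Pj j. *)
rewrite /T RmxE p_left_comm; set z := p v (p x 'e_j).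
have zP : z *m P = z by rewrite /z -p_left_comm p_nilproj x0.
have zPj : z *m Pj j = 0.
  rewrite /z -RmxE -mulmxA mulmxE -(Pj_comm (Rmx_comm _ _)) -mulmxE.
  by rewrite mulmxA vPj mul0mx.
by rewrite -zP -(nilproj_absorb j) -mulmxE mulmxA zP zPj.
Qed.

(* A1 lies in A.A, on which the product is commutative. *)
Lemma compl_comm x y : x *m P = 0 -> y *m P = 0 -> p x y = p y x.
Proof.
have in_prods w : w *m P = 0 ->
    exists r : seq ('I_m.+1 * V), w = \sum_(t <- r) p t.2 'e_t.1.
  move=> w1; have [r [def_w _]] := Pprod_compl_decomp (index_enum _) w.
  exists r; rewrite -(compl_fixed w1) def_w.
  by apply: eq_bigr => t _; rewrite RmxE.
move=> /in_prods [r ->] /in_prods [r' ->].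
rewrite psuml [RHS]psuml; under eq_bigr do rewrite psumr.
under [RHS]eq_bigr do rewrite psumr.
rewrite exchange_big; apply: eq_bigr => t _; apply: eq_bigr => t' _.
exact: prod_prod_comm.
Qed.

(* Every R(y) is nilpotent on A0: R(y) = sum_j y_j T_j with commuting T_j,
   each nilpotent on the image of Pj j and hence of P. *)
Lemma Rmx_nil_on_nilproj y : exists k, P * Rmx y ^+ k = 0.
Proof.
rewrite Rmx_sum; apply: mul_expr_sum_eq0 => [i j | i | i].
- by rewrite /GRing.comm -!scalerAl -!scalerAr Rmx_comm !scalerA mulrC.
- by rewrite /GRing.comm -scalerAl -scalerAr nilproj_comm.
- have [k Pk] : exists k, Pj i * T i ^+ k = 0 by case: (Pj_fitting i).
  exists k; rewrite exprZn -scalerAr -(nilproj_absorb i).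
  by rewrite -mulrA Pk mulr0 scaler0.
Qed.

Definition cprod (x y : V) : V := p (x *m P) (y *m P) - p (y - y *m P) (x *m P).

Lemma cprod_nilproj x y : cprod x y *m P = p (x *m P) (y *m P).
Proof. by rewrite /cprod mulmxBl !p_nilproj nilproj_compl p0l subr0 nilprojK. Qed.

Lemma cprod_bilin : bilin_map cprod.
Proof.
have splitB a (x y : V) : a *: x + y - (a *: (x *m P) + y *m P) =
    a *: (x - x *m P) + (y - y *m P) by rewrite scalerBr opprD addrACA.
split=> a x y z; rewrite /cprod mulmxDl -scalemxAl.
  by rewrite pDZl pDZr scalerBr opprD addrACA.
by rewrite splitB pDZl pDZr scalerBr opprD addrACA.
Qed.

(* Nested o-products, expressed through the original product: the A1-part
   of an o-product on the left is killed by A0.A1 = 0. *)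
Lemma cprod_inner x y z :
  cprod x (cprod y z) = p (x *m P) (p (y *m P) (z *m P))
                        + p (p (z - z *m P) (y *m P)) (x *m P).
Proof.
rewrite {1}/cprod cprod_nilproj -pNl; congr (_ + p _ _).
by rewrite /cprod opprB subKr.
Qed.

Lemma cprod_outer x y z :
  cprod (cprod x y) z = p (p (x *m P) (y *m P)) (z *m P).
Proof.
have w1 : p (z - z *m P) (y *m P) *m P = 0.
  by rewrite p_nilproj nilproj_compl p0l.
rewrite {1}/cprod cprod_nilproj p_left_comm.
by rewrite (nil_compl_eq0 (nilprojK x) w1) subr0.
Qed.

Lemma cprod_left_comm x y z : cprod x (cprod y z) = cprod y (cprod x z).
Proof. by rewrite !cprod_inner p_left_comm [p (p (z - _) _) _]p_right_comm. Qed.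

Lemma cprod_right_comm x y z : cprod (cprod x y) z = cprod (cprod x z) y.
Proof. by rewrite !cprod_outer p_right_comm. Qed.

(* Since A0.A1 = 0, x.y = x0.y0 + x1.y0 + x1.y1. *)
Lemma p_split x y : p x y = p (x *m P) (y *m P) + p (x - x *m P) (y *m P)
                            + p (x - x *m P) (y - y *m P).
Proof.
have x0y1 := nil_compl_eq0 (nilprojK x) (nilproj_compl y).
rewrite -{1}(subrK (x *m P) x) -{1}(subrK (y *m P) y).
move: x0y1; set x0 := x *m P; set y0 := y *m P.
set x1 := x - x0; set y1 := y - y0 => x0y1.
clearbody x0 x1 y0 y1.
by rewrite pDl !pDr x0y1 add0r addrC [p x1 y1 + _]addrC addrA.
Qed.

(* o has the same commutator as ., as x1.y1 = y1.x1. *)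
Lemma cprod_commutator x y : cprod x y - cprod y x = p x y - p y x.
Proof.
have rearrange (A B C D E : V) : A - E - (D - B) = A + B + C - (D + E + C).
  by rewrite [D + E + C]addrC addrKA opprB opprD addrACA [- E + _]addrC.
rewrite (p_split x) (p_split y) (compl_comm (nilproj_compl x) (nilproj_compl y)).
exact: rearrange.
Qed.

(* Right o-multiplication by y maps A into A0, where it acts as R(y0). *)
Lemma cprod_complete : complete_product cprod.
Proof.
move=> y; have [k Pk] := Rmx_nil_on_nilproj (y *m P); exists k.+1 => x.
have iter_nilproj j (w : V) :
    iter j (right_mul cprod y) w *m P = w *m P *m Rmx (y *m P) ^+ j.
  elim: j w => [|j IH] w; first by rewrite expr0 mulmx1.
  by rewrite iterS /right_mul cprod_nilproj -RmxE IH exprSr -mulmxE mulmxA.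
rewrite iterS /right_mul; set w := iter k _ x.
have w1 : w *m P = 0 by rewrite /w iter_nilproj -mulmxA mulmxE Pk mulmx0.
by rewrite /cprod w1 p0l p0r subr0.
Qed.

End LRAlgebra.

Lemma complete_LR_algebra (F : fieldType) (m : nat)
    (p : 'rV[F]_m.+1 -> 'rV[F]_m.+1 -> 'rV[F]_m.+1) :
  is_LR_algebra p -> exists q, [/\ is_LR_algebra q,
    (forall x y, q x y - q y x = p x y - p y x) & complete_product q].
Proof.
case=> p_bilin p_left_comm p_right_comm.
have [Pj Pj_fitting] :=
  fin_all_exists (fun j => fitting_projector_exists (T p j)).
exists (cprod p Pj); split.
- split; [exact: cprod_bilin | exact: cprod_left_comm | exact: cprod_right_comm].
- exact: cprod_commutator.
- exact: cprod_complete.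
Qed.

Theorem mainTheorem10 (F : fieldType) (n : nat)
    (br : 'rV[F]_n -> 'rV[F]_n -> 'rV[F]_n) :
  [pchar F] =i pred0 ->
  is_lie_bracket br ->
  (exists p, is_LR_structure br p) ->
  exists p, is_LR_structure br p /\ complete_product p.
Proof.
move=> _ _ [p [pLR p_br]]; case: n br p pLR p_br => [|m] br p pLR p_br.
  exists p; split=> // x; exists 0%N => y.
  by apply/rowP => -[].
have [q [qLR q_comm q_complete]] := complete_LR_algebra pLR.
by exists q; split=> //; split=> // x y; rewrite q_comm.
Qed.
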